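(* Let $\mathcal{E}=\{e_1,\dots,e_n\}$ be an orthonormal basis for $\mathbb{R}^n$, let $k\le[(n+1)/2]$ and let $u_1\in\mathbb{R}^n$ be a unit vector with $|\mathrm{supp}(u_1)|=k$. Then $u_1$ can be extended to an orthonormal set $\{u_1,\dots,u_k\}$ such that $M=\mathrm{span}\{u_1,\dots,u_k\}$ is a $k$-dimensional maximal $\mathcal{E}$-PR subspace.
   Context: $[a]$ is the integer part of $a$. For $x=\sum_{i=1}^n\alpha_ie_i$, $\mathrm{supp}(x)=\{i:\alpha_i\neq0\}$. A subspace $M$ is an $\mathcal{E}$-PR subspace if $\{P_Me_i\}_{i=1}^n$ (with $P_M$ the orthogonal projection onto $M$) spans $M$ and whenever $x,y\in M$ satisfy $|\langle x,P_Me_i\rangle|=|\langle y,P_Me_i\rangle|$ for all $i$, then $x=\pm y$. It is maximal if it is not a proper subspace of another $\mathcal{E}$-PR subspace. *)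

From HB Require Import structures.
From mathcomp Require Import all_boot all_order all_algebra.
From mathcomp Require Import reals.
Set Implicit Arguments. Unset Strict Implicit. Unset Printing Implicit Defensive.
Import Order.TTheory GRing.Theory Num.Theory.
Local Open Scope ring_scope.

Section Defs.
Variables (R : realType) (n : nat).

Definition dotv (x y : 'rV[R]_n) : R := (x *m y^T) 0 0.

(* An orthonormal basis E = {e_1..e_n} is given as the rows of E : 'M_n. *)
Definition orthonormal_basis (E : 'M[R]_n) : Prop := E *m E^T = 1%:M.

(* supp(x) w.r.t. E: x = sum_i alpha_i e_i with alpha_i = <x, e_i>. *)
Definition suppE (E : 'M[R]_n) (x : 'rV[R]_n) : {set 'I_n} :=
  [set i | dotv x (row i E) != 0].

(* A subspace M of R^n is represented (mxalgebra style) by a matrix M : 'M_(m, n)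
   whose row space is M. *)
Definition projmx (m : nat) (M : 'M[R]_(m, n)) : 'M[R]_n :=
  let B := row_base M in (B^T *m invmx (B *m B^T)) *m B.

Definition projv (m : nat) (M : 'M[R]_(m, n)) (x : 'rV[R]_n) : 'rV[R]_n := x *m projmx M.

Definition EPR (E : 'M[R]_n) (m : nat) (M : 'M[R]_(m, n)) : Prop :=
  ((\matrix_(i < n) projv M (row i E)) == M)%MS /\
  (forall x y : 'rV[R]_n, (x <= M)%MS -> (y <= M)%MS ->
     (forall i : 'I_n, `|dotv x (projv M (row i E))| = `|dotv y (projv M (row i E))|) ->
     x = y \/ x = - y).

Definition maximal_EPR (E : 'M[R]_n) (m : nat) (M : 'M[R]_(m, n)) : Prop :=
  EPR E M /\ forall (m' : nat) (M' : 'M[R]_(m', n)), EPR E M' -> ~ (M < M')%MS.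

End Defs.

From Pilot Require Import Defs.
From HB Require Import structures.
From mathcomp Require Import all_boot all_order all_algebra.
From mathcomp Require Import reals.
From mathcomp Require Import zify.
Set Implicit Arguments. Unset Strict Implicit. Unset Printing Implicit Defensive.
Import Order.TTheory GRing.Theory Num.Theory.
Local Open Scope ring_scope.

(* Work in the coordinates of E and let d = |supp u1|.  Choose d - 1 indices
   S outside supp u1 (possible since 2d - 1 <= n) and distinct nodes l_i.  For
   weights m supported on supp u1 + S, the vectors (m_i q(l_i))_i with
   deg q < d form a d-dimensional space, which contains u1 for a suitable m
   (take q = prod_(s in S) (X - l_s)).  It is E-PR: if two of its vectors have
   entries of equal modulus, (p - q)(p + q) vanishes at the 2d - 1 nodes of
   supp m but has degree at most 2d - 2.  It is maximal because an E-PR space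
   containing u1 has dimension at most d: otherwise it contains some w <> 0
   vanishing on supp u1, and then u1 + w and u1 - w have entries of equal
   modulus.  Gram-Schmidt started at u1 yields the orthonormal basis. *)

Section Orthonormal.
Variables (R : realType) (n : nat).
Implicit Types (u v : 'rV[R]_n).

Lemma sqnorm_ge0 v : 0 <= (v *m v^T) 0 0.
Proof. by rewrite mxE; apply: sumr_ge0 => j _; rewrite mxE -expr2 sqr_ge0. Qed.

Lemma sqnorm_eq0 v : ((v *m v^T) 0 0 == 0) = (v == 0).
Proof.
apply/idP/eqP => [|->]; last by rewrite mul0mx mxE.
rewrite mxE psumr_eq0 => [/allP v0|j _]; last by rewrite mxE -expr2 sqr_ge0.
apply/rowP => j; have := v0 j (mem_index_enum j).
by rewrite mxE -expr2 sqrf_eq0 mxE => /eqP.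
Qed.

Lemma orthonormal_row_free p (P : 'M[R]_(p, n)) : P *m P^T = 1%:M -> row_free P.
Proof.
move=> PP; rewrite /row_free eqn_leq rank_leq_row /=.
by rewrite -{1}(mxrank1 R p) -PP mxrankM_maxl.
Qed.

Lemma orthonormal_col_mx p q (P : 'M[R]_(p, n)) (Q : 'M[R]_(q, n)) :
  P *m P^T = 1%:M -> Q *m Q^T = 1%:M -> Q *m P^T = 0 ->
  col_mx P Q *m (col_mx P Q)^T = 1%:M.
Proof.
move=> PP QQ QP; have PQ : P *m Q^T = 0 by rewrite -[P]trmxK -trmx_mul QP trmx0.
rewrite tr_col_mx mul_col_mx !mul_mx_row PP QQ PQ QP.
by rewrite scalar_mx_block block_mxEv.
Qed.

Lemma normalize_row v : v != 0 ->
  exists w : 'rV[R]_n, w *m w^T = 1%:M /\ (w == v)%MS.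
Proof.
move=> v0; have sq_gt0 : 0 < (v *m v^T) 0 0.
  by rewrite lt_def sqnorm_eq0 v0 sqnorm_ge0.
set s := Num.sqrt ((v *m v^T) 0 0).
have s0 : s != 0 by rewrite gt_eqF // sqrtr_gt0.
exists (s^-1 *: v); split; last by apply/eqmxP/eqmx_scale; rewrite invr_eq0.
apply/rowP => i; rewrite ord1 linearZ /= -scalemxAl -scalemxAr mxE [X in _ * X]mxE.
by rewrite mulrA -expr2 exprVn sqr_sqrtr ?ltW // mulVf ?gt_eqF // mxE.
Qed.

Lemma residual_orth q (Q : 'M[R]_(q, n)) v : Q *m Q^T = 1%:M ->
  (v - v *m Q^T *m Q) *m Q^T = 0.
Proof. by move=> QQ; rewrite mulmxBl -!mulmxA QQ mulmx1 subrr. Qed.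

Lemma adds_residual q (Q : 'M[R]_(q, n)) v :
  (Q + (v - v *m Q^T *m Q) :=: Q + v)%MS.
Proof.
rewrite addsmxC; apply: eqmx_trans (addsmx_addKr _ _) _; last by rewrite addsmxC.
by rewrite eqmx_opp submxMl.
Qed.

Lemma gram_schmidt q (Q : 'M[R]_(q, n)) m (A : 'M[R]_(m, n)) : Q *m Q^T = 1%:M ->
  exists r (W : 'M[R]_(r, n)),
    [/\ W *m W^T = 1%:M, W *m Q^T = 0 & (Q + W == Q + A)%MS].
Proof.
elim: m q Q A => [|m IHm] q Q A QQ.
  exists 0%N, A.
  by split; [apply/matrixP => -[] | apply/matrixP => -[] | apply/eqmxP].
move: A; rewrite -add1n => A; rewrite -[A]vsubmxK.
set v := usubmx A; set A' := dsubmx A.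
have QA : (Q + col_mx v A' :=: Q + (v - v *m Q^T *m Q) + A')%MS.
  apply: eqmx_trans (adds_eqmx (eqmx_refl Q) (eqmx_sym (addsmxE v A'))) _.
  rewrite addsmxA.
  exact: adds_eqmx (eqmx_sym (adds_residual Q v)) (eqmx_refl A').
have [v0|/normalize_row[w [ww /eqmxP wv]]] := eqVneq (v - v *m Q^T *m Q) 0.
  have [r [W [WW WQ /eqmxP QW]]] := IHm q Q A' QQ.
  exists r, W; split => //; apply/eqmxP; rewrite v0 in QA.
  apply: eqmx_trans QW (eqmx_sym (eqmx_trans QA _)).
  by apply: adds_eqmx; [exact: addsmx0 | exact: eqmx_refl].
have wQ : w *m Q^T = 0.
  have /submxP[D ->] : (w <= v - v *m Q^T *m Q)%MS by rewrite wv.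
  by rewrite -[D *m _ *m _]mulmxA residual_orth ?mulmx0.
have [r [W [WW /eqP WQw /eqmxP QW]]] := IHm _ _ A' (orthonormal_col_mx QQ ww wQ).
move: WQw; rewrite tr_col_mx mul_mx_row row_mx_eq0 => /andP[/eqP WQ /eqP Ww].
exists (1 + r)%N, (col_mx w W); split.
- exact: orthonormal_col_mx.
- by rewrite mul_col_mx wQ WQ col_mx0.
apply/eqmxP; apply: eqmx_trans (eqmx_sym QA).
apply: eqmx_trans (adds_eqmx (eqmx_refl Q) (eqmx_sym (addsmxE w W))) _.
rewrite addsmxA; apply: eqmx_trans (adds_eqmx (addsmxE Q w) (eqmx_refl W)) _.
apply: eqmx_trans QW _; apply: adds_eqmx (eqmx_refl A').
exact: eqmx_trans (eqmx_sym (addsmxE Q w)) (adds_eqmx (eqmx_refl Q) wv).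
Qed.

Lemma orthonormal_basis_through d (u : 'rV[R]_n) (A : 'M[R]_(d.+1, n)) :
  u *m u^T = 1%:M -> (u <= A)%MS -> row_free A ->
  exists U : 'M[R]_(d.+1, n), [/\ U *m U^T = 1%:M, row 0 U = u & (U == A)%MS].
Proof.
move=> uu uA /eqP rA; have [r [W [WW Wu /eqmxP uWA]]] := gram_schmidt A uu.
have UA : (col_mx u W :=: A)%MS.
  apply: eqmx_trans (eqmx_sym (addsmxE u W)) (eqmx_trans uWA _).
  exact/addsmx_idPr.
have UU := orthonormal_col_mx uu WW Wu.
have r_eq : r = d.
  by have := orthonormal_row_free UU; rewrite /row_free UA rA => /eqP[].
subst r; exists (col_mx u W); split => //; last exact/eqmxP.
have -> : (0 : 'I_d.+1) = lshift d (0 : 'I_1) by apply: val_inj.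
exact: etrans (rowKu _ u W) (row_id _ _).
Qed.

End Orthonormal.

Section Projection.
Variables (R : realType) (n : nat).

Lemma gram_unitmx m (B : 'M[R]_(m, n)) : row_free B -> B *m B^T \in unitmx.
Proof.
move=> fB; rewrite -row_free_unit -kermx_eq0; apply/rowV0P => v /sub_kermxP vBB.
apply/eqP; rewrite -(mulmx_free_eq0 _ fB) -sqnorm_eq0.
by rewrite trmx_mul mulmxA -(mulmxA v) vBB mul0mx mxE.
Qed.

Variables (m : nat) (M : 'M[R]_(m, n)).

Lemma projmx_sym : (projmx M)^T = projmx M.
Proof.
rewrite /projmx /=; move: (row_base M) => B.
by rewrite !trmx_mul trmxK trmx_inv trmx_mul trmxK mulmxA.
Qed.

Lemma projmx_id p (x : 'M[R]_(p, n)) : (x <= M)%MS -> x *m projmx M = x.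
Proof.
rewrite -(eq_row_base M) => /submxP[D ->]; rewrite /projmx /=.
have := gram_unitmx (row_base_free M); move: (row_base M) => B BB.
by rewrite !mulmxA -(mulmxA D) -(mulmxA D) mulmxV ?mulmx1.
Qed.

Lemma projmx_sub : (projmx M <= M)%MS.
Proof.
by rewrite /projmx /=; apply: submx_trans (submxMl _ _) _; rewrite eq_row_base.
Qed.

Lemma dotv_projv x y : (x <= M)%MS -> dotv x (Defs.projv M y) = dotv x y.
Proof.
by move=> xM; rewrite /dotv /Defs.projv trmx_mul projmx_sym mulmxA projmx_id.
Qed.

Lemma projv_rows_eqmx E : orthonormal_basis E ->
  ((\matrix_(i < n) Defs.projv M (row i E)) == M)%MS.
Proof.
move=> oE; have -> : \matrix_(i < n) Defs.projv M (row i E) = E *m projmx M.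
  by apply/row_matrixP => i; rewrite rowK row_mul.
rewrite (submx_trans (submxMl _ _) projmx_sub) /=.
have MEP : M = M *m E^T *m (E *m projmx M).
  by rewrite mulmxA -(mulmxA M) (mulmx1C oE) mulmx1 projmx_id.
by rewrite {1}MEP submxMl.
Qed.

End Projection.

Section Coordinates.
Variables (R : realType) (n : nat).

Definition supp (a : 'rV[R]_n) : {set 'I_n} := [set i | a 0 i != 0].

Definition phase_retrievable m (N : 'M[R]_(m, n)) : Prop :=
  forall a b : 'rV[R]_n, (a <= N)%MS -> (b <= N)%MS ->
    (forall i, `|a 0 i| = `|b 0 i|) -> a = b \/ a = - b.

Lemma supp_card_gt0 (c : 'rV[R]_n) : c != 0 -> (0 < #|supp c|)%N.
Proof.
rewrite card_gt0; apply: contraNneq => c0; apply/eqP/rowP => i; apply/eqP.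
by move: (in_set0 i); rewrite -c0 inE mxE; case: eqP.
Qed.

Lemma phase_retrievableS m1 m2 (N1 : 'M[R]_(m1, n)) (N2 : 'M[R]_(m2, n)) :
  (N1 <= N2)%MS -> phase_retrievable N2 -> phase_retrievable N1.
Proof. by move=> N12 PR2 a b aN bN; apply: PR2; apply: submx_trans N12. Qed.

Lemma dotv_row (E : 'M[R]_n) x i : dotv x (row i E) = (x *m E^T) 0 i.
Proof. by rewrite /dotv tr_row !mxE; apply: eq_bigr => j _; rewrite !mxE. Qed.

Lemma suppE_supp (E : 'M[R]_n) x : suppE E x = supp (x *m E^T).
Proof. by apply/setP => i; rewrite !inE dotv_row. Qed.

Lemma EPR_phase_retrievable (E : 'M[R]_n) m (M : 'M[R]_(m, n)) :
  orthonormal_basis E -> EPR E M <-> phase_retrievable (M *m E^T).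
Proof.
move=> oE; have EE := mulmx1C oE.
have coordK p (x : 'M[R]_(p, n)) : x *m E^T *m E = x by rewrite -mulmxA EE mulmx1.
have coordKV p (x : 'M[R]_(p, n)) : x *m E *m E^T = x by rewrite -mulmxA oE mulmx1.
have coordE x i : (x <= M)%MS -> dotv x (Defs.projv M (row i E)) = (x *m E^T) 0 i.
  by move=> xM; rewrite dotv_projv ?dotv_row.
split=> [[_ PR] a b aM bM ab | PR]; last first.
  split=> [|x y xM yM xy]; first exact: projv_rows_eqmx.
  have [|xyE|xyE] := PR _ _ (submxMr E^T xM) (submxMr E^T yM).
  - by move=> i; rewrite -!coordE.
  - by left; rewrite -[x]coordK xyE coordK.
  - by right; rewrite -[x]coordK xyE mulNmx coordK.
have aEM : (a *m E <= M)%MS by rewrite -[M]coordK submxMr.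
have bEM : (b *m E <= M)%MS by rewrite -[M]coordK submxMr.
have [|abE|abE] := PR _ _ aEM bEM.
- by move=> i; rewrite !coordE ?coordKV.
- by left; rewrite -[a]coordKV abE coordKV.
- by right; rewrite -[a]coordKV abE mulNmx coordKV.
Qed.

Lemma exists_vanishing_on m (N : 'M[R]_(m, n)) (T : {set 'I_n}) :
  (#|T| < \rank N)%N ->
  exists2 w : 'rV[R]_n, (w <= N)%MS & w != 0 /\ {in T, forall i, w 0 i = 0}.
Proof.
move=> TN; set C := colsub (@enum_val _ (mem T)) (row_base N).
have [a aC a0] : exists2 a : 'rV[R]_(\rank N), (a <= kermx C)%MS & a != 0.
  apply/rowV0Pn; rewrite kermx_eq0; apply: contraTN TN => /eqP <-.
  by rewrite -leqNgt rank_leq_col.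
exists (a *m row_base N).
  by rewrite (submx_trans (submxMl _ _)) ?eq_row_base.
split; first by rewrite mulmx_free_eq0 ?row_base_free.
move=> i iT; move/sub_kermxP/rowP: aC => /(_ (enum_rank_in iT i)).
by rewrite mulmx_colsub !mxE enum_rankK_in.
Qed.

Lemma phase_retrievable_rank_le_supp m (N : 'M[R]_(m, n)) c :
  phase_retrievable N -> (c <= N)%MS -> c != 0 -> (\rank N <= #|supp c|)%N.
Proof.
move=> PR cN c0; rewrite leqNgt; apply/negP => /exists_vanishing_on[w wN [w0 wT]].
have NwN : (- w <= N)%MS by rewrite eqmx_opp.
have [i|/eqP|/eqP] := PR (c + w) (c - w) (addmx_sub cN wN) (addmx_sub cN NwN).
- rewrite !mxE; have [iT|] := boolP (i \in supp c).
    by rewrite wT ?subr0 ?addr0.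
  by rewrite inE negbK => /eqP ->; rewrite add0r sub0r normrN.
- rewrite (inj_eq (addrI c)) -addr_eq0 -mulr2n -scaler_nat scaler_eq0.
  by rewrite pnatr_eq0 (negbTE w0).
- rewrite opprB addrC (inj_eq (addrI w)) -addr_eq0 -mulr2n -scaler_nat scaler_eq0.
  by rewrite pnatr_eq0 (negbTE c0).
Qed.

End Coordinates.

Section WeightedEvaluation.
Variables (R : realType) (n : nat).

Definition node (i : 'I_n) : R := i%:R.

Lemma node_inj : injective node.
Proof. by move=> i j /eqP; rewrite eqr_nat => /eqP /val_inj. Qed.

Lemma poly_eq0_roots (p : {poly R}) (A : {set 'I_n}) :
  (size p <= #|A|)%N -> {in A, forall i, root p (node i)} -> p = 0.
Proof.
move=> sp rootA; apply/eqP/negP => /negP p0.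
have := max_poly_roots p0 (rs := [seq node i | i <- enum A]).
rewrite (map_inj_uniq node_inj) enum_uniq size_map -cardE.
have -> : all (root p) [seq node i | i <- enum A].
  by apply/allP => x /mapP[i]; rewrite mem_enum => iA ->; apply: rootA.
by move=> /(_ isT isT); rewrite ltnNge sp.
Qed.

Variable mu : 'rV[R]_n.

Definition weval (p : {poly R}) : 'rV[R]_n := \row_i (mu 0 i * p.[node i]).

Definition wevalmx d : 'M[R]_(d, n) := \matrix_(j < d) weval 'X^j.

Lemma mul_wevalmx d (v : 'rV[R]_d) : v *m wevalmx d = weval (rVpoly v).
Proof.
apply/rowP => i; rewrite !mxE horner_poly mulr_sumr.
by apply: eq_bigr => j _; rewrite valK !mxE hornerXn mulrCA.
Qed.

Lemma weval_sub d (p : {poly R}) : (size p <= d)%N -> (weval p <= wevalmx d)%MS.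
Proof. by move=> sp; rewrite -(poly_rV_K sp) -mul_wevalmx submxMl. Qed.

Lemma sub_wevalmx d a : (a <= wevalmx d)%MS ->
  exists2 p : {poly R}, (size p <= d)%N & a = weval p.
Proof.
by case/submxP => v ->; exists (rVpoly v); rewrite ?size_poly ?mul_wevalmx.
Qed.

Lemma weval_eq0 (p : {poly R}) : (size p <= #|supp mu|)%N -> weval p = 0 -> p = 0.
Proof.
move=> sp /rowP p0; apply: (@poly_eq0_roots p (supp mu) sp) => i.
rewrite inE => mui.
by move: (p0 i); rewrite !mxE => /eqP; rewrite mulf_eq0 (negbTE mui).
Qed.

Lemma wevalmx_free d : (d <= #|supp mu|)%N -> row_free (wevalmx d).
Proof.
move=> dmu; rewrite -kermx_eq0; apply/rowV0P => v /sub_kermxP.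
rewrite mul_wevalmx => /weval_eq0 v0.
by rewrite -[v]rVpolyK v0 ?linear0 // (leq_trans (size_poly _ _) dmu).
Qed.

Lemma wevalmx_phase_retrievable d : (d.*2 <= #|supp mu|.+1)%N ->
  phase_retrievable (wevalmx d).
Proof.
move=> dmu a b /sub_wevalmx[p sp ->] /sub_wevalmx[q sq ->] pq.
have smq : (size (p - q)%R <= d)%N.
  by rewrite (leq_trans (size_polyD _ _)) // size_polyN geq_max sp sq.
have spq : (size (p + q)%R <= d)%N.
  by rewrite (leq_trans (size_polyD _ _)) // geq_max sp sq.
have sqd : (size ((p - q) * (p + q))%R <= #|supp mu|)%N.
  rewrite (leq_trans (size_polyMleq _ _)) //; move: dmu; rewrite -muln2; lia.
have roots : {in supp mu, forall i, root ((p - q) * (p + q)) (node i)}.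
  move=> i; rewrite inE => mui; move/eqP: (pq i).
  rewrite !mxE !normrM (inj_eq (mulfI _)) ?normr_eq0 // eqr_norm2.
  by rewrite rootM /root hornerD hornerN subr_eq0 hornerD addr_eq0.
move/eqP: (poly_eq0_roots sqd roots); rewrite mulf_eq0 subr_eq0 addr_eq0.
case/orP=> /eqP->; [left | right] => //.
by apply/rowP => i; rewrite !mxE hornerN mulrN.
Qed.

End WeightedEvaluation.

Arguments node {R n}.

Lemma exists_weval_repr (R : realType) n (c : 'rV[R]_n) :
  c != 0 -> ((#|supp c|).*2 <= n.+1)%N ->
  exists mu (p : {poly R}), [/\ (size p <= #|supp c|)%N, c = weval mu p
                            & ((#|supp c|).*2 <= #|supp mu|.+1)%N].
Proof.
move=> c0; set T := supp c => hn.
have T0 := supp_card_gt0 c0.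
have [s [s_uniq s_size sT]] :
    exists s, [/\ uniq s, size s = #|T|.-1 & {subset s <= ~: T}].
  apply/card_geqP; have := cardsC T; rewrite card_ord.
  by move: hn; rewrite -muln2; lia.
pose p0 : {poly R} := \prod_(x <- map node s) ('X - x%:P).
have root_p0 i : root p0 (node i) = (i \in s).
  by rewrite root_prod_XsubC (mem_map (@node_inj R n)).
have notT i : i \in s -> c 0 i = 0 by move/sT; rewrite !inE negbK => /eqP.
(* Off [s] the weight rescales [p0] to [c]; on [s] both vanish, so any nonzero
   weight works. *)
pose mu := \row_i (if i \in s then 1 else c 0 i / p0.[node i]).
exists mu, p0; split.
- by rewrite size_prod_XsubC size_map s_size prednK.
- apply/rowP => i; rewrite !mxE; case: ifPn => si.
    by rewrite notT // (rootP _) ?root_p0 ?mulr0.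
  by rewrite divfK // -[_ != 0]/(~~ root _ _) root_p0.
have disj : [disjoint T & [set x in s]].
  by rewrite disjoint_sym disjoints_subset; apply/subsetP => x; rewrite inE => /sT.
have card_Ts : #|T :|: [set x in s]| = (#|T| + size s)%N.
  rewrite cardsU (disjoint_setI0 disj) cards0 subn0 -(card_uniqP s_uniq).
  by congr (_ + _)%N; apply: eq_card => x; rewrite inE.
have : T :|: [set x in s] \subset supp mu.
  apply/subsetP => i; rewrite !inE mxE; case: ifPn => si.
    by rewrite oner_neq0.
  rewrite orbF => ci; rewrite mulf_neq0 // invr_eq0.
  by rewrite -[_ != 0]/(~~ root _ _) root_p0.
move/subset_leq_card; rewrite card_Ts s_size -muln2; lia.
Qed.

Theorem theorem4p3 (R : realType) (n k : nat) (E : 'M[R]_n) (u1 : 'rV[R]_n) :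
  orthonormal_basis E ->
  (k <= (n + 1) %/ 2)%N ->
  dotv u1 u1 = 1 ->
  #|suppE E u1| = k ->
  exists U : 'M[R]_(k, n),
    [/\ U *m U^T = 1%:M,
        exists i : 'I_k, row i U = u1,
        \rank U = k &
        maximal_EPR E U].
Proof.
move=> oE hk hu hs; set c := u1 *m E^T.
have u1E : u1 = c *m E by rewrite -mulmxA (mulmx1C oE) mulmx1.
have uu : u1 *m u1^T = 1%:M by apply/matrixP => i j; rewrite !ord1 [RHS]mxE.
have c0 : c != 0.
  apply/eqP => c0; move: hu; rewrite /dotv u1E c0 !mul0mx mxE => /eqP.
  by rewrite eq_sym oner_eq0.
have suppc : #|supp c| = k by rewrite -suppE_supp.
have [mu [p [sp cp hmu]]] : exists mu (p : {poly R}),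
    [/\ (size p <= k)%N, c = weval mu p & (k.*2 <= #|supp mu|.+1)%N].
  rewrite -suppc; apply: (exists_weval_repr c0).
  by move: hk; rewrite suppc leq_divRL // addn1 muln2.
case: k {hk hs} suppc sp hmu => [suppc|k suppc sp hmu].
  by have := supp_card_gt0 c0; rewrite suppc.
pose G := wevalmx mu k.+1.
have E_unit : E \in unitmx by case: (mulmx1_unit oE).
have GE_free : row_free (G *m E).
  by rewrite /row_free mxrankMfree ?row_free_unit //; apply: wevalmx_free; lia.
have u1G : (u1 <= G *m E)%MS by rewrite u1E cp submxMr ?weval_sub.
have [U [UU U0 /eqmxP UG]] := orthonormal_basis_through uu u1G GE_free.
exists U; split => //; first by exists 0.
  exact/eqP/orthonormal_row_free.
split.
  apply/EPR_phase_retrievable => //.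
  apply: phase_retrievableS (wevalmx_phase_retrievable hmu).
  by rewrite (eqmxMr _ UG) -mulmxA oE mulmx1.
move=> m M /(EPR_phase_retrievable _ oE) PR ltUM.
have cM : (c <= M *m E^T)%MS.
  by rewrite submxMr // -U0 (submx_trans (row_sub 0 U)) ?ltmxW.
have := phase_retrievable_rank_le_supp PR cM c0.
rewrite mxrankMfree ?row_free_unit ?unitmx_tr //.
by have := rank_ltmx ltUM; rewrite (eqP (orthonormal_row_free UU)) suppc; lia.
Qed.
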